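(* For $0\le r\le\min\{m,n\}$, the monomials $\mathfrak{m}(\mathcal{R})$ for $\mathcal{R}\in\bigsqcup_{d=0}^{r}\mathcal{Z}_{n,m,d}$ descend to a spanning set of $R(\mathcal{Z}_{n,m,r})$. In particular $R(\mathcal{Z}_{n,m,r})_d=\{0\}$ for $d>r$.
   Context: Fix positive integers $n,m$. $\mathbb{C}[\mathbf{x}_{n\times m}]$ is the polynomial ring in variables $x_{i,j}$ ($1\le i\le n,1\le j\le m$). For finite $\mathcal{Z}\subseteq\mathrm{Mat}_{n\times m}(\mathbb{C})$, $\mathbf{I}(\mathcal{Z})$ is its vanishing ideal, $\mathrm{gr}\,\mathbf{I}(\mathcal{Z})$ the ideal generated by top-degree homogeneous components of its nonzero elements, and $R(\mathcal{Z})=\mathbb{C}[\mathbf{x}_{n\times m}]/\mathrm{gr}\,\mathbf{I}(\mathcal{Z})$, graded by degree. A rook placement on the $n\times m$ board is a subset $\mathcal{R}\subseteq[n]\times[m]$ with at most one element in each row and column, identified with its $0/1$ matrix; $\mathcal{Z}_{n,m,d}$ is the set of rook placements with exactly $d$ elements; $\mathfrak{m}(\mathcal{R}):=\prod_{(i,j)\in\mathcal{R}}x_{i,j}$. *)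

From HB Require Import structures.
From mathcomp Require Import all_boot all_algebra.
From mathcomp Require Import Rstruct.
From mathcomp Require Import complex.
From mathcomp Require Import mpoly.
From Stdlib Require Reals.

Set Implicit Arguments.
Unset Strict Implicit.
Unset Printing Implicit Defensive.

Import GRing.Theory.
Local Open Scope ring_scope.

Notation CC := (complex Rdefinitions.R).

(* C[x_{n x m}]: polynomial ring in the n*m variables x_{i,j}, the variable
   x_{i,j} being indexed by mxvec_index i j : 'I_(n*m). *)
Notation Pnm n m := {mpoly CC[n * m]}.

Definition xvar n m (i : 'I_n) (j : 'I_m) : Pnm n m := 'X_(mxvec_index i j).

Definition evalmx n m (A : 'M[CC]_(n, m)) (p : Pnm n m) : CC :=
  p.@[fun k => mxvec A 0 k].

Definition vanI n m (Z : 'M[CC]_(n, m) -> Prop) (p : Pnm n m) : Prop :=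
  forall A, Z A -> evalmx A p = 0.

Definition topc n m (p : Pnm n m) : Pnm n m :=
  \sum_(mm <- msupp p | mdeg mm == (msize p).-1) p@_mm *: 'X_[mm].

(* gr I: the ideal generated by the top-degree components of the nonzero
   elements of I, i.e. finite combinations  sum_k a_k * topc f_k. *)
Definition grI n m (I : Pnm n m -> Prop) (q : Pnm n m) : Prop :=
  exists s : seq (Pnm n m * Pnm n m),
    (forall x, x \in s -> I x.2 /\ x.2 != 0) /\
    q = \sum_(x <- s) x.1 * topc x.2.

Definition is_rook n m (R : {set 'I_n * 'I_m}) : bool :=
  [forall a in R, forall b in R, ((a.1 == b.1) || (a.2 == b.2)) ==> (a == b)].

Definition rook_mx n m (R : {set 'I_n * 'I_m}) : 'M[CC]_(n, m) :=
  \matrix_(i, j) (((i, j) \in R)%:R : CC).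

Definition Zrook n m (d : nat) (A : 'M[CC]_(n, m)) : Prop :=
  exists R : {set 'I_n * 'I_m}, [/\ is_rook R, #|R| = d & A = rook_mx R].

Definition rookmon n m (R : {set 'I_n * 'I_m}) : Pnm n m :=
  \prod_(a in R) xvar a.1 a.2.

(* Work modulo J := gr I(Z_{n,m,r}).  Every entry of a rook placement is 0 or 1,
   so x_{ij}^2 - x_{ij} vanishes on Z_{n,m,r} and its top component x_{ij}^2 lies
   in J; hence only squarefree monomials m(S) matter.  If S is not a rook
   placement with at most r rooks, then S is contained in no element of
   Z_{n,m,r}, so the homogeneous polynomial m(S) itself vanishes there and lies
   in J.  Thus every monomial is either in J or equal to some m(R) with R a rook
   placement of size at most r, which gives the spanning statement; and a
   monomial of degree d > r cannot be such an m(R). *)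

From HB Require Import structures.
From mathcomp Require Import all_boot all_algebra.
From mathcomp Require Import Rstruct complex mpoly.
Set Implicit Arguments. Unset Strict Implicit. Unset Printing Implicit Defensive.
Import GRing.Theory.
Local Open Scope ring_scope.

Section TopHomogeneousPart.
Variables (k : nat) (R : nzRingType).
Implicit Types (p q : {mpoly R[k]}).

Lemma msize_dhomog d p : p \is d.-homog -> p != 0 -> msize p = d.+1.
Proof.
move=> hp p0; have := dhomog_uniq p0 (dhomog_msize hp) hp.
by move: p0; rewrite -msize_poly_eq0; case: (msize p) => //= s _ ->.
Qed.

Lemma pihomog_msize_le d p : (msize p <= d)%N -> pihomog mdeg d p = 0.
Proof.
move=> pd; rewrite pihomogE big_seq_cond big1 // => mm /andP[mmp /eqP dmm].
by have := leq_trans (msize_mdeg_lt mmp) pd; rewrite dmm ltnn.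
Qed.

Lemma msize_dhomogD d p q :
  p \is d.-homog -> p != 0 -> (msize q <= d)%N -> msize (p + q) = d.+1.
Proof.
move=> hp p0 qd; have szp := msize_dhomog hp p0.
have [mm mmp] : exists mm, mm \in msupp p.
  by move: p0; rewrite -msupp_eq0; case: (msupp p) => // mm s _; exists mm; rewrite inE eqxx.
have dmm : mdeg mm = d := dhomog_mf hp mmp.
have mmpq : mm \in msupp (p + q).
  rewrite mcoeff_msupp mcoeffD (@memN_msupp_eq0 _ _ q) ?addr0 -?mcoeff_msupp //.
  by apply: msize_mdeg_ge; rewrite dmm.
apply/eqP; rewrite eqn_leq -dmm (msize_mdeg_lt mmpq) andbT dmm.
by rewrite (leq_trans (msizeD_le _ _)) // szp geq_max leqnn (leq_trans qd).
Qed.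

Lemma pihomog_top_dhomogD d p q :
  p \is d.-homog -> p != 0 -> (msize q <= d)%N ->
  pihomog mdeg (msize (p + q)).-1 (p + q) = p.
Proof.
move=> hp p0 qd.
by rewrite (msize_dhomogD hp) // pihomogD pihomog_dE // pihomog_msize_le // addr0.
Qed.
End TopHomogeneousPart.

Lemma topcE n m (p : Pnm n m) : topc p = pihomog mdeg (msize p).-1 p.
Proof. by []. Qed.

Section AssociatedGradedIdeal.
Variables (n m : nat) (I : Pnm n m -> Prop).

Lemma grI0 : grI I 0.
Proof. by exists [::]; split=> //; rewrite big_nil. Qed.

Lemma grID p q : grI I p -> grI I q -> grI I (p + q).
Proof.
move=> [s [Is ->]] [t [It ->]]; exists (s ++ t); split; last by rewrite big_cat.
by move=> x; rewrite mem_cat => /orP[/Is|/It].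
Qed.

Lemma grIMl h p : grI I p -> grI I (h * p).
Proof.
move=> [s [Is ->]]; exists [seq (h * x.1, x.2) | x <- s]; split.
  by move=> _ /mapP[x /Is Ix ->].
by rewrite big_map mulr_sumr; apply: eq_bigr => x _; rewrite mulrA.
Qed.

Lemma grI_topc f : I f -> f != 0 -> grI I (topc f).
Proof.
move=> If f0; exists [:: (1, f)]; split; last by rewrite big_seq1 mul1r.
by move=> x; rewrite inE => /eqP ->.
Qed.

Lemma grI_dhomog d p : I p -> p \is d.-homog -> p != 0 -> grI I p.
Proof.
move=> Ip hp p0; have := grI_topc Ip p0.
by rewrite topcE (msize_dhomog hp p0) pihomog_dE.
Qed.
End AssociatedGradedIdeal.

Lemma X_neq0 k (R : nzRingType) (mm : 'X_{1..k}) : 'X_[mm] != 0 :> {mpoly R[k]}.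
Proof. by rewrite -msupp_eq0 msuppX. Qed.

Section RookPlacements.
Variables n m : nat.
Implicit Types (R S : {set 'I_n * 'I_m}) (A : 'M[CC]_(n, m)).

Lemma sub_is_rook R S : is_rook R -> S \subset R -> is_rook S.
Proof.
move=> /forall_inP rookR /subsetP SR; apply/forall_inP => a aS.
by apply/forall_inP => b bS; exact: (forall_inP (rookR a (SR a aS)) b (SR b bS)).
Qed.

Lemma evalmx_xvar A i j : evalmx A (xvar i j) = A i j.
Proof. by rewrite /evalmx mevalXU mxvecE. Qed.

Lemma eval_rookmon R S : evalmx (rook_mx R) (rookmon S) = (S \subset R)%:R.
Proof.
rewrite /rookmon /evalmx (big_morph _ (@mevalM _ _ _) (@meval1 _ _ _)).
under eq_bigr do rewrite -/(evalmx _ _) evalmx_xvar mxE -surjective_pairing.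
have [SR|/subsetPn[a aS aR]] := boolP (S \subset R).
  by rewrite big1 // => a /(subsetP SR) ->.
by rewrite (bigD1 a) //= (negbTE aR) mul0r.
Qed.

Lemma rookmon_setU1 R i j :
  (i, j) \notin R -> xvar i j * rookmon R = rookmon ((i, j) |: R).
Proof. by move=> ijR; rewrite /rookmon big_setU1. Qed.

Definition rook_mnm S : 'X_{1..(n * m)} := (\sum_(a in S) U_(mxvec_index a.1 a.2))%MM.

Lemma rookmonE S : rookmon S = 'X_[rook_mnm S].
Proof.
by rewrite /rook_mnm (big_morph (fun mm => 'X_[mm] : Pnm n m) (@mpolyXD _ _) (@mpolyX0 _ _)).
Qed.

Lemma mdeg_rook_mnm S : mdeg (rook_mnm S) = #|S|.
Proof.
rewrite /rook_mnm mdeg_sum (eq_bigr (fun _ => 1%N)) ?sum1_card // => a _.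
exact: mdeg1.
Qed.

Lemma rookmon_dhomog S : rookmon S \is #|S|.-homog.
Proof. by rewrite rookmonE dhomogX; apply/eqP/mdeg_rook_mnm. Qed.

Lemma rookmon_neq0 S : rookmon S != 0.
Proof. by rewrite rookmonE X_neq0. Qed.
End RookPlacements.

Section RookReduction.
Variables n m r : nat.
Local Notation grZ := (grI (vanI (@Zrook n m r))).
Local Notation rook_le_r R := (is_rook R && (#|R| <= r)%N).

Lemma grZ_var_sqr (k : 'I_(n * m)) : grZ ('X_k * 'X_k).
Proof.
case: (mxvec_indexP k) => i j; pose x := xvar i j : Pnm n m.
have hx : x \is 1.-homog by rewrite dhomogX; apply/eqP/mdeg1.
have hx2 : x * x \is 2.-homog := dhomogM hx hx.
have x2_neq0 : x * x != 0 by rewrite -mpolyXD X_neq0.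
have sz_x : (msize (- x) <= 2)%N by rewrite msizeN msizeX mdeg1.
have := @grI_topc _ _ (vanI (@Zrook n m r)) (x * x - x).
rewrite topcE (pihomog_top_dhomogD hx2) //; apply.
  move=> _ [R [_ _ ->]].
  rewrite /evalmx mevalB mevalM -/(evalmx _ _) evalmx_xvar mxE.
  by case: (_ \in R); rewrite ?mulr1 ?mulr0 subrr.
by rewrite -msize_poly_eq0 (msize_dhomogD hx2).
Qed.

Lemma grZ_rookmon S : ~~ rook_le_r S -> grZ (rookmon S).
Proof.
move=> notS; apply: grI_dhomog (rookmon_dhomog S) (rookmon_neq0 S).
move=> _ [R [rookR cardR ->]]; rewrite eval_rookmon.
have [SR|//] := boolP (S \subset R).
by move: notS; rewrite (sub_is_rook rookR SR) -cardR subset_leq_card.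
Qed.

Definition grZ_or_rookmon (q : Pnm n m) : Prop :=
  grZ q \/ exists2 R, rook_le_r R & q = rookmon R.

Lemma grZ_or_rookmonXM k q : grZ_or_rookmon q -> grZ_or_rookmon ('X_k * q).
Proof.
case=> [gq | [R rookR ->]]; first by left; apply: grIMl.
case: (mxvec_indexP k) => i j; rewrite -/(xvar i j).
have [ijR | ijNR] := boolP ((i, j) \in R).
  left; rewrite /rookmon (bigD1 (i, j)) //= mulrA mulrC.
  exact/grIMl/grZ_var_sqr.
rewrite rookmon_setU1 //.
have [small | /grZ_rookmon] := boolP (rook_le_r ((i, j) |: R)); last by left.
by right; exists ((i, j) |: R).
Qed.

Lemma grZ_or_rookmonX (mm : 'X_{1..(n * m)}) : grZ_or_rookmon 'X_[mm].
Proof.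
rewrite mpolyXE_id; apply: big_rec => [|k q _ IHq].
  right; exists set0; last by rewrite /rookmon big_set0.
  by rewrite cards0 andbT; apply/forall_inP => a; rewrite inE.
elim: (mm k) => [|e IHe]; first by rewrite expr0 mul1r.
by rewrite exprS -mulrA; apply: grZ_or_rookmonXM.
Qed.

Definition rook_span_mod (p : Pnm n m) : Prop :=
  exists c : {set 'I_n * 'I_m} -> CC,
    grZ (p - \sum_(R : {set 'I_n * 'I_m} | rook_le_r R) c R *: rookmon R).

Lemma rook_span_mod_grZ p : grZ p -> rook_span_mod p.
Proof.
by move=> gp; exists (fun=> 0); rewrite big1 ?subr0 // => R _; rewrite scale0r.
Qed.

Lemma rook_span_mod_rookmon R : rook_le_r R -> rook_span_mod (rookmon R).
Proof.
move=> rookR; exists (fun S => (S == R)%:R).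
rewrite (bigD1 R) //= eqxx scale1r big1 ?addr0 ?subrr; first exact: grI0.
by move=> S /andP[_ /negbTE ->]; rewrite scale0r.
Qed.

Lemma rook_span_modD p q :
  rook_span_mod p -> rook_span_mod q -> rook_span_mod (p + q).
Proof.
move=> [c gp] [d gq]; exists (fun R => c R + d R).
under eq_bigr do rewrite scalerDl.
by rewrite big_split /= opprD addrACA; apply: grID.
Qed.

Lemma rook_span_modZ a p : rook_span_mod p -> rook_span_mod (a *: p).
Proof.
move=> [c gp]; exists (fun R => a * c R).
under eq_bigr do rewrite -scalerA.
by rewrite -scaler_sumr -scalerBr -mul_mpolyC; apply: grIMl.
Qed.

Lemma rook_span_mod_all p : rook_span_mod p.
Proof.
rewrite [p]mpolyE; apply: big_ind => [|q1 q2|mm _].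
- exact/rook_span_mod_grZ/grI0.
- exact: rook_span_modD.
apply: rook_span_modZ; case: (grZ_or_rookmonX mm) => [|[R rookR ->]].
  exact: rook_span_mod_grZ.
exact: rook_span_mod_rookmon.
Qed.

Lemma grZ_dhomog_gt d p : (r < d)%N -> p \is d.-homog -> grZ p.
Proof.
move=> ltrd hp; rewrite [p]mpolyE big_seq; apply: big_ind => [|q1 q2|mm mmp].
- exact: grI0.
- exact: grID.
rewrite -mul_mpolyC; apply: grIMl.
case: (grZ_or_rookmonX mm) => [//|[R /andP[_ cardR] eR]].
have := dhomog_uniq (rookmon_neq0 R) (rookmon_dhomog R).
rewrite -eR => /(_ d); rewrite dhomogX (dhomog_mf hp mmp) eqxx => /(_ isT) dR.
by move: ltrd; rewrite -dR ltnNge cardR.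
Qed.
End RookReduction.

Theorem mainTheorem7 (n m r : nat) :
  (0 < n)%N -> (0 < m)%N -> (r <= minn n m)%N ->
  (forall p : Pnm n m,
     exists c : {set 'I_n * 'I_m} -> CC,
       grI (vanI (Zrook r))
           (p - \sum_(R : {set 'I_n * 'I_m} | is_rook R && (#|R| <= r)%N)
                  c R *: rookmon R)) /\
  (forall (d : nat) (p : Pnm n m),
     (r < d)%N -> p \is d.-homog -> grI (vanI (Zrook r)) p).
Proof.
move=> _ _ _; split; [exact: rook_span_mod_all | exact: grZ_dhomog_gt].
Qed.
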